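(* Let $q$ be a nonzero complex number with $q^4\ne 1$, and let $\zeta,\kappa,\zeta',\kappa'$ be nonzero complex numbers with $\zeta,\zeta'\neq\pm1$ and $\kappa^4\neq1$, $(\kappa')^4\ne1$. Then the space of $U_q(\mathfrak{gl}(1|1))$-module homomorphisms $V(\zeta,\kappa)\otimes V(\zeta',\kappa')\to V(\zeta',\kappa')\otimes V(\zeta,\kappa)$ is two-dimensional, spanned by the maps $R=R_{\zeta,\zeta'}$ and $R'=R'_{\zeta,\zeta'}$ defined by \[\phi(x\otimes x')=a_2\,x'\otimes x,\ \phi(x\otimes y')=c_2\,x'\otimes y+b_2\,y'\otimes x,\ \phi(y\otimes x')=b_1\,x'\otimes y+c_1\,y'\otimes x,\ \phi(y\otimes y')=a_1\,y'\otimes y\] with \[\begin{array}{c|cccccc} & a_1 & a_2 & b_1 & b_2 & c_1 & c_2\\\hline R & -\zeta\zeta' & 1 & \zeta' & \zeta & 1-\zeta^2 & 0\\ R' & 1 & -\zeta\zeta' & -\zeta & -\zeta' & 0 & 1-(\zeta')^2\end{array}\]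
   Context: $[\zeta]=\frac{\zeta-\zeta^{-1}}{q-q^{-1}}$. $U_q(\mathfrak{gl}(1|1))$ is the associative superalgebra generated by odd $E,F$ and even invertible commuting $W^{\pm1},K^{\pm1}$ with relations $KEK^{-1}=q^2E$, $KFK^{-1}=q^{-2}F$, $W$ central, $EF+FE=\frac{W-W^{-1}}{q-q^{-1}}$, $E^2=F^2=0$, with comultiplication $\Delta(W)=W\otimes W$, $\Delta(K)=K\otimes K$, $\Delta(E)=E\otimes W^{-1}+1\otimes E$, $\Delta(F)=F\otimes1+W\otimes F$; tensor products of modules use the sign rule $(a\otimes b)(v\otimes w)=(-1)^{|b||v|}(av\otimes bw)$. $V(\zeta,\kappa)$ is the module with basis $x$ (even), $y$ (odd): $Ex=0$, $Fx=y$, $Wx=\zeta x$, $Kx=\kappa x$, $Fy=0$, $Ey=[\zeta]x$, $Wy=\zeta y$, $Ky=q^{-2}\kappa y$; $V(\zeta',\kappa')$ similarly with basis $x',y'$. *)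

From HB Require Import structures.
From mathcomp Require Import all_boot all_order all_algebra.
From mathcomp Require Import reals complex.
Set Implicit Arguments. Unset Strict Implicit. Unset Printing Implicit Defensive.
Import Order.TTheory GRing.Theory Num.Theory.
Local Open Scope ring_scope.

Section Gl11.
Variable C : fieldType.
Variable q : C.

Inductive gen := GE | GF | GK | GKi | GW | GWi.

Definition qbr (z : C) : C := (z - z^-1) / (q - q^-1).

(* The module V(z,k): basis index 0 = x (even), 1 = y (odd).
   Matrix convention: (rhoV z k g) i j = coefficient of e_i in g . e_j. *)
Definition mx2 (a b c d : C) : 'M[C]_2 :=
  \matrix_(i < 2, j < 2)
    (if (i : nat) == 0%N then (if (j : nat) == 0%N then a else b)
     else (if (j : nat) == 0%N then c else d)).

Definition rhoV (z k : C) (g : gen) : 'M[C]_2 :=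
  match g with
  | GE  => mx2 0 (qbr z) 0 0
  | GF  => mx2 0 0 1 0
  | GW  => mx2 z 0 0 z
  | GWi => mx2 z^-1 0 0 z^-1
  | GK  => mx2 k 0 0 (q^-2 * k)
  | GKi => mx2 k^-1 0 0 (q^+2 * k^-1)
  end.

Definition oddb (i : 'I_2) : bool := (i : nat) == 1%N.
Definition sgn (b : bool) : C := if b then -1 else 1.

(* basis of a tensor product of two 2-dim superspaces: p : 'I_4 stands for
   e_(p %/ 2) (x) f_(p %% 2), i.e. order 00, 01, 10, 11 *)
Definition tfst (p : 'I_4) : 'I_2 := inord (p %/ 2).
Definition tsnd (p : 'I_4) : 'I_2 := inord (p %% 2).

(* the operator A (x) B on the tensor product with the sign rule
   (a (x) b)(v (x) w) = (-1)^{|b||v|} (a v (x) b w); oddB = parity of B *)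
Definition stens (oddB : bool) (A B : 'M[C]_2) : 'M[C]_4 :=
  \matrix_(p < 4, r < 4)
    (sgn (oddB && oddb (tfst r)) * A (tfst p) (tfst r) * B (tsnd p) (tsnd r)).

(* action on V1 (x) V2 via the comultiplication
   D(E) = E (x) W^-1 + 1 (x) E, D(F) = F (x) 1 + W (x) F,
   D(K) = K (x) K, D(W) = W (x) W (and likewise for the inverses). *)
Definition rhoT (rho1 rho2 : gen -> 'M[C]_2) (g : gen) : 'M[C]_4 :=
  match g with
  | GE => stens false (rho1 GE) (rho2 GWi) + stens true 1%:M (rho2 GE)
  | GF => stens false (rho1 GF) 1%:M + stens true (rho1 GW) (rho2 GF)
  | g' => stens false (rho1 g') (rho2 g')
  end.

(* phi : 'M_4 (columns = images of basis vectors) is a module homomorphism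
   V(z,k) (x) V(z',k') -> V(z',k') (x) V(z,k) *)
Definition is_hom (z k z' k' : C) (phi : 'M[C]_4) : Prop :=
  forall g : gen,
    phi *m rhoT (rhoV z k) (rhoV z' k') g = rhoT (rhoV z' k') (rhoV z k) g *m phi.

(* the map phi of the paper in terms of a1 a2 b1 b2 c1 c2.
   Source basis: 0 = x(x)x', 1 = x(x)y', 2 = y(x)x', 3 = y(x)y'.
   Target basis: 0 = x'(x)x, 1 = x'(x)y, 2 = y'(x)x, 3 = y'(x)y. *)
Definition phimx (a1 a2 b1 b2 c1 c2 : C) : 'M[C]_4 :=
  \matrix_(i < 4, j < 4)
    nth 0 (nth [::] [:: [:: a2; 0; 0; 0];
                        [:: 0; c2; b1; 0];
                        [:: 0; b2; c1; 0];
                        [:: 0; 0; 0; a1]] i) j.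

Definition Rmx (z z' : C) : 'M[C]_4 := phimx (- z * z') 1 z' z (1 - z ^+ 2) 0.
Definition R'mx (z z' : C) : 'M[C]_4 := phimx 1 (- z * z') (- z) (- z') 0 (1 - z' ^+ 2).

End Gl11.

(* A homomorphism commutes with K, which acts on the tensor basis by the
   weights k k' q^(-2d), d being the number of odd tensor factors; since
   q^4 <> 1 it preserves d, hence has the shape [phimx a1 a2 b1 b2 c1 c2],
   while W acts by the scalar z z'.  For such a map the relations imposed by
   F and E show that c1 = c2 = 0 forces the map to vanish.  As R and R' are
   homomorphisms with (c1, c2) equal to (1 - z^2, 0) and (0, 1 - z'^2), every
   homomorphism phi is c1/(1 - z^2) R + c2/(1 - z'^2) R', and R, R' are
   linearly independent. *)

From Pilot Require Import Defs.
From HB Require Import structures.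
From mathcomp Require Import all_boot all_order all_algebra.
From mathcomp Require Import reals complex.
From mathcomp Require Import ring.
Set Implicit Arguments. Unset Strict Implicit. Unset Printing Implicit Defensive.
Import Order.TTheory GRing.Theory Num.Theory.
Local Open Scope ring_scope.

Lemma diag_mx_commute (R : idomainType) (n : nat) (d : 'rV[R]_n) (A : 'M_n) :
  A *m diag_mx d = diag_mx d *m A <-> forall i j, d 0 i != d 0 j -> A i j = 0.
Proof.
rewrite mul_mx_diag mul_diag_mx; split=> [/matrixP AdE i j | A0].
  move: (AdE i j); rewrite !mxE mulrC => /eqP; rewrite -subr_eq0 -mulrBl.
  by rewrite mulf_eq0 subr_eq0 => /orP[/eqP->|/eqP]; rewrite ?eqxx.
apply/matrixP=> i j; rewrite !mxE.
by have [->|/A0->] := eqVneq (d 0 i) (d 0 j); rewrite ?mulr0 ?mul0r // mulrC.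
Qed.

Lemma eq_mul_expr_le2 (F : fieldType) (c t : F) (m n : nat) :
  c != 0 -> t != 0 -> t != 1 -> t ^+ 2 != 1 -> (m <= 2)%N -> (n <= 2)%N ->
  (c * t ^+ m == c * t ^+ n) = (m == n).
Proof.
move=> c0 t0 t1 t21 m2 n2; rewrite (inj_eq (mulfI c0)).
have t_t2 : (t == t ^+ 2) = false.
  by rewrite expr2 -{1}(mulr1 t) (inj_eq (mulfI t0)) eq_sym (negbTE t1).
case: m n m2 n2 => [|[|[|//]]] [|[|[|//]]] // _ _; rewrite ?expr0 ?expr1 ?eqxx //;
  by rewrite ?(negbTE t1) ?(negbTE t21) ?t_t2 // eq_sym ?(negbTE t1) ?(negbTE t21) ?t_t2.
Qed.

Ltac mx4_entrywise := apply/matrixP => -[[|[|[|[|?]]]] ?] -[[|[|[|[|?]]]] ?] //.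

Section TensorBasis.
Variable C : fieldType.

Definition mx4 (rows : seq (seq C)) : 'M[C]_4 :=
  \matrix_(i < 4, j < 4) nth 0 (nth [::] rows i) j.

Definition tdeg (p : 'I_4) : nat := tfst p + tsnd p.

Lemma tfstE (p : 'I_4) : tfst p = (p %/ 2)%N :> nat.
Proof. by rewrite inordK // ltn_divLR //; case: p. Qed.

Lemma tsndE (p : 'I_4) : tsnd p = (p %% 2)%N :> nat.
Proof. by rewrite inordK // ltn_pmod. Qed.

Lemma tdegE (p : 'I_4) : tdeg p = (p %/ 2 + p %% 2)%N.
Proof. by rewrite /tdeg tfstE tsndE. Qed.

Lemma tdeg_le2 (p : 'I_4) : (tdeg p <= 2)%N.
Proof. by rewrite /tdeg -[2%N]/(1 + 1)%N; apply: leq_add; rewrite -ltnS ltn_ord. Qed.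

Definition deg_preserving (phi : 'M[C]_4) : Prop :=
  forall i j : 'I_4, tdeg i != tdeg j -> phi i j = 0.

Lemma commute_weights (c t : C) (phi : 'M[C]_4) :
  c != 0 -> t != 0 -> t != 1 -> t ^+ 2 != 1 ->
  phi *m diag_mx (\row_p (c * t ^+ tdeg p)) = diag_mx (\row_p (c * t ^+ tdeg p)) *m phi
  <-> deg_preserving phi.
Proof.
move=> c0 t0 t1 t21; set w := \row_p _.
have wE i j : (w 0 i != w 0 j) = (tdeg i != tdeg j).
  by rewrite !mxE eq_mul_expr_le2 ?tdeg_le2.
by rewrite diag_mx_commute; split=> phi0 i j; [rewrite -wE | rewrite wE]; apply: phi0.
Qed.

Lemma deg_preservingP (phi : 'M[C]_4) :
  deg_preserving phi <->
  exists a1 a2 b1 b2 c1 c2, phi = phimx a1 a2 b1 b2 c1 c2.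
Proof.
split=> [phi0 | [a1 [a2 [b1 [b2 [c1 [c2 ->]]]]]] i j].
  exists (phi 3 3), (phi 0 0), (phi 1 2), (phi 2 1), (phi 2 2), (phi 1 1).
  mx4_entrywise; rewrite mxE /=;
    first [by congr (phi _ _); apply: val_inj | by apply: phi0; rewrite !tdegE].
by case: i j => [[|[|[|[|?]]]] ?] [[|[|[|[|?]]]] ?] //; rewrite mxE !tdegE.
Qed.

End TensorBasis.

Section TensorAction.
Variables (C : fieldType) (q z k z' k' : C).

Ltac rhoT_entrywise :=
  mx4_entrywise; rewrite !mxE ?tdegE /Defs.oddb -?val_eqE /= ?tfstE ?tsndE /=; ring.

Lemma rhoT_K : rhoT (rhoV q z k) (rhoV q z' k') GK =
  diag_mx (\row_p (k * k' * q ^- 2 ^+ tdeg p)).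
Proof. rhoT_entrywise. Qed.

Lemma rhoT_Ki : rhoT (rhoV q z k) (rhoV q z' k') GKi =
  diag_mx (\row_p (k^-1 * k'^-1 * q ^+ 2 ^+ tdeg p)).
Proof. rhoT_entrywise. Qed.

Lemma rhoT_W : rhoT (rhoV q z k) (rhoV q z' k') GW = (z * z')%:M.
Proof. rhoT_entrywise. Qed.

Lemma rhoT_Wi : rhoT (rhoV q z k) (rhoV q z' k') GWi = (z^-1 * z'^-1)%:M.
Proof. rhoT_entrywise. Qed.

Lemma rhoT_F : rhoT (rhoV q z k) (rhoV q z' k') GF =
  mx4 [:: [:: 0; 0; 0; 0]; [:: z; 0; 0; 0]; [:: 1; 0; 0; 0]; [:: 0; 1; - z; 0]].
Proof. rhoT_entrywise. Qed.

Lemma rhoT_E : rhoT (rhoV q z k) (rhoV q z' k') GE =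
  mx4 [:: [:: 0; qbr q z'; qbr q z / z'; 0]; [:: 0; 0; 0; qbr q z / z'];
          [:: 0; 0; 0; - qbr q z']; [:: 0; 0; 0; 0]].
Proof. rhoT_entrywise. Qed.

End TensorAction.

Section Homomorphisms.
Variables (C : fieldType) (q : C).
Hypotheses (q0 : q != 0) (q4 : q ^+ 4 != 1).

Lemma q2_neq1 : q ^+ 2 != 1.
Proof. by apply: contra q4 => /eqP q2; rewrite -[4%N]/(2 * 2)%N exprM q2 expr1n. Qed.

Lemma qbr_neq0 (x : C) : x != 0 -> x ^+ 2 != 1 -> qbr q x != 0.
Proof.
move=> x0 x2; rewrite /qbr mulf_neq0 // ?invr_eq0 subr_eq0.
  by apply: contra x2 => /eqP xE; rewrite expr2 {1}xE mulVf.
by apply: contra q2_neq1 => /eqP qE; rewrite expr2 {1}qE mulVf.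
Qed.

Variables (z k z' k' : C).
Hypotheses (k0 : k != 0) (k'0 : k' != 0).

Lemma is_homP (phi : 'M[C]_4) :
  is_hom q z k z' k' phi <->
  [/\ deg_preserving phi,
      phi *m rhoT (rhoV q z k) (rhoV q z' k') GF = rhoT (rhoV q z' k') (rhoV q z k) GF *m phi &
      phi *m rhoT (rhoV q z k) (rhoV q z' k') GE = rhoT (rhoV q z' k') (rhoV q z k) GE *m phi].
Proof.
have q20 : q ^+ 2 != 0 by rewrite expf_neq0.
have q22 : q ^+ 2 ^+ 2 != 1 by rewrite -exprM.
have K_deg : phi *m rhoT (rhoV q z k) (rhoV q z' k') GK = rhoT (rhoV q z' k') (rhoV q z k) GK *m phi
    <-> deg_preserving phi.
  rewrite !rhoT_K [k' * k]mulrC; apply: commute_weights; rewrite ?mulf_neq0 ?invr_eq0 ?invr_eq1 //.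
    exact: q2_neq1.
  by rewrite exprVn invr_eq1.
split=> [hom | [deg homF homE]]; first by split=> //; apply/K_deg.
case; rewrite // ?rhoT_W ?rhoT_Wi ?[z' * z]mulrC ?[z'^-1 * z^-1]mulrC ?scalar_mxC //.
  exact/K_deg.
rewrite !rhoT_Ki [k'^-1 * k^-1]mulrC; apply/commute_weights; rewrite ?mulf_neq0 ?invr_eq0 //.
exact: q2_neq1.
Qed.

Lemma is_hom_lincomb (a b : C) (phi psi : 'M[C]_4) :
  is_hom q z k z' k' phi -> is_hom q z k z' k' psi ->
  is_hom q z k z' k' (a *: phi + b *: psi).
Proof.
by move=> hphi hpsi g; rewrite mulmxDl mulmxDr -!scalemxAl -!scalemxAr hphi hpsi.
Qed.

Hypotheses (z0 : z != 0) (z'0 : z' != 0) (z2 : z ^+ 2 != 1) (z'2 : z' ^+ 2 != 1).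

Lemma Rmx_R'mx_hom : is_hom q z k z' k' (Rmx z z') /\ is_hom q z k z' k' (R'mx z z').
Proof.
have q21 : q * q - 1 != 0 by rewrite subr_eq0 -expr2 q2_neq1.
split; apply/is_homP; split;
  first [by apply/deg_preservingP; do 6 eexists | rewrite ?rhoT_F ?rhoT_E];
  mx4_entrywise; rewrite !mxE !big_ord_recr !big_ord0 /= !mxE /= /qbr;
  by field; rewrite ?z0 ?z'0 ?q0 ?q21.
Qed.

(* [phi 1 1] and [phi 2 2] are the coefficients c2 and c1 of [phimx]. *)
Lemma hom_eq0 (phi : 'M[C]_4) :
  is_hom q z k z' k' phi -> phi 1 1 = 0 -> phi 2 2 = 0 -> phi = 0.
Proof.
case/is_homP=> [/deg_preservingP[a1 [a2 [b1 [b2 [c1 [c2 ->]]]]]] /matrixP homF /matrixP homE].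
rewrite !mxE /= => c20 c10; subst c1 c2.
move: (homF 1 0) (homF 2 0) (homF 3 1) (homE 0 1).
rewrite !rhoT_F !rhoT_E !mxE !big_ord_recr !big_ord0 /= !mxE /=.
rewrite !(mul0r, mulr0, add0r, addr0, mulr1, mul1r) => -> <- -> bE.
have b20 : b2 = 0.
  have : b2 * (qbr q z' * (z ^+ 2 - 1)) = z * (b2 * z * qbr q z' - qbr q z' / z * b2).
    by field.
  have nz : qbr q z' * (z ^+ 2 - 1) != 0 by rewrite mulf_neq0 ?qbr_neq0 // subr_eq0.
  by rewrite bE subrr mulr0 => /eqP; rewrite mulf_eq0 (negbTE nz) orbF => /eqP.
by rewrite b20 !(mul0r, mulr0, oppr0); mx4_entrywise; rewrite !mxE.
Qed.

Lemma hom_span (phi : 'M[C]_4) : is_hom q z k z' k' phi ->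
  phi = (phi 2 2 / (1 - z ^+ 2)) *: Rmx z z' + (phi 1 1 / (1 - z' ^+ 2)) *: R'mx z z'.
Proof.
move=> hphi; have [homR homR'] := Rmx_R'mx_hom.
have [dz dz'] : 1 - z ^+ 2 != 0 /\ 1 - z' ^+ 2 != 0 by rewrite !subr_eq0 ![1 == _]eq_sym.
apply/eqP; rewrite -subr_eq0; apply/eqP; apply: hom_eq0; rewrite ?mxE /=.
- set a := _ / _; set b := _ / _.
  rewrite -(scale1r phi) -scaleN1r.
  by apply: is_hom_lincomb => //; apply: is_hom_lincomb.
- by rewrite mulr0 add0r divfK // subrr.
- by rewrite mulr0 addr0 divfK // subrr.
Qed.

End Homomorphisms.

Lemma Rmx_R'mx_free (C : fieldType) (z z' a b : C) :
  z ^+ 2 != 1 -> z' ^+ 2 != 1 -> a *: Rmx z z' + b *: R'mx z z' = 0 -> a = 0 /\ b = 0.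
Proof.
move=> z2 z'2 /matrixP RR'0.
have [dz dz'] : 1 - z ^+ 2 != 0 /\ 1 - z' ^+ 2 != 0 by rewrite !subr_eq0 ![1 == _]eq_sym.
move: (RR'0 2 2) (RR'0 1 1); rewrite !mxE /= !(mulr0, addr0, add0r).
by move=> /eqP + /eqP; rewrite !mulf_eq0 (negbTE dz) (negbTE dz') !orbF => /eqP-> /eqP->.
Qed.

Local Open Scope complex_scope.

Theorem theorem4p3 (R : realType) (q z k z' k' : R[i])
  (hq0 : q != 0) (hq4 : q ^+ 4 != 1)
  (hz0 : z != 0) (hk0 : k != 0) (hz'0 : z' != 0) (hk'0 : k' != 0)
  (hz1 : z != 1) (hzm1 : z != -1) (hz'1 : z' != 1) (hz'm1 : z' != -1)
  (hk4 : k ^+ 4 != 1) (hk'4 : k' ^+ 4 != 1) :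
  (forall phi : 'M[R[i]]_4,
      is_hom q z k z' k' phi <->
      exists a b : R[i], phi = a *: Rmx z z' + b *: R'mx z z') /\
  (forall a b : R[i], a *: Rmx z z' + b *: R'mx z z' = 0 -> a = 0 /\ b = 0).
Proof.
have z2 : z ^+ 2 != 1 by rewrite sqrf_eq1 negb_or hz1 hzm1.
have z'2 : z' ^+ 2 != 1 by rewrite sqrf_eq1 negb_or hz'1 hz'm1.
have [homR homR'] := Rmx_R'mx_hom hq0 hq4 hk0 hk'0 hz0 hz'0.
split=> [phi|]; last by move=> a b; apply: Rmx_R'mx_free.
split=> [/(hom_span hq0 hq4 hk0 hk'0 hz0 hz'0 z2 z'2) -> | [a [b ->]]].
  by do 2 eexists.
exact: is_hom_lincomb.
Qed.
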